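(* Let $\mathfrak{N}$ be a pseudo-Euclidean 2-step nilpotent Lie algebra with center $\mathfrak{Z}$, let $(e_1,\ldots,e_p)$ be a basis of $\mathfrak{Z}$ and let $(J_1,\ldots,J_p)$ be the associated structure endomorphisms. Define endomorphisms $F,G:\mathfrak{N}\to\mathfrak{N}$ by $$F=\frac12\sum_{i,j=1}^p\langle e_i,e_j\rangle\, J_i\circ J_j,\qquad G(u)=-\frac14\sum_{i,j=1}^p\langle e_i,u\rangle\,\mathrm{tr}(J_i\circ J_j)\,e_j .$$ Then $F$ and $G$ are symmetric with respect to $\langle\cdot,\cdot\rangle$, they do not depend on the choice of the basis $(e_1,\ldots,e_p)$ of $\mathfrak{Z}$, and $F\circ G=G\circ F=0$.
   Context: A pseudo-Euclidean Lie algebra is a finite-dimensional real Lie algebra endowed with a nondegenerate symmetric bilinear form $\langle\cdot,\cdot\rangle$ (no invariance assumed). A Lie algebra $\mathfrak{N}$ is 2-step nilpotent if $[\mathfrak{N},\mathfrak{N}]\neq 0$ and $[\mathfrak{N},\mathfrak{N}]\subset\mathfrak{Z}$, the center. Given a basis $(e_1,\ldots,e_p)$ of $\mathfrak{Z}$, the structure endomorphisms $J_1,\ldots,J_p$ are the unique endomorphisms of $\mathfrak{N}$, skew-symmetric with respect to $\langle\cdot,\cdot\rangle$, such that $[u,v]=\sum_{i=1}^p\langle J_iu,v\rangle e_i$ for all $u,v\in\mathfrak{N}$; one has $\bigcap_i\ker J_i=\mathfrak{Z}$. *)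

(* Endomorphisms act on the right: u |-> u *m A,
   so the composition A o B (apply B first) has matrix B *m A. *)
From HB Require Import structures.
From mathcomp Require Import all_boot all_order all_algebra.
From mathcomp Require Import reals.
Set Implicit Arguments. Unset Strict Implicit. Unset Printing Implicit Defensive.
Import Order.TTheory GRing.Theory Num.Theory.
Local Open Scope ring_scope.

Section Defs.
Variables (R : realType) (n : nat).

Definition form (S : 'M[R]_n) (u v : 'rV[R]_n) : R := (u *m S *m v^T) 0 0.

Definition pseudo_euclidean (S : 'M[R]_n) : Prop := S^T = S /\ S \in unitmx.

Definition is_lie_bracket (br : 'rV[R]_n -> 'rV[R]_n -> 'rV[R]_n) : Prop :=
  [/\ forall (a : R) u v w, br (a *: u + v) w = a *: br u w + br v w,
      forall (a : R) u v w, br u (a *: v + w) = a *: br u v + br u w,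
      forall u, br u u = 0 &
      forall u v w, br u (br v w) + br v (br w u) + br w (br u v) = 0].

Definition center (br : 'rV[R]_n -> 'rV[R]_n -> 'rV[R]_n) (z : 'rV[R]_n) : Prop :=
  forall u, br z u = 0.

Definition two_step_nilpotent (br : 'rV[R]_n -> 'rV[R]_n -> 'rV[R]_n) : Prop :=
  (exists u v, br u v != 0) /\ (forall u v, center br (br u v)).

Definition is_basis_of (P : 'rV[R]_n -> Prop) (p : nat) (e : 'I_p -> 'rV[R]_n) : Prop :=
  [/\ forall i, P (e i),
      (forall c : 'I_p -> R, \sum_i c i *: e i = 0 -> forall i, c i = 0) &
      forall z, P z -> exists c : 'I_p -> R, z = \sum_i c i *: e i].

Definition skew (S : 'M[R]_n) (A : 'M[R]_n) : Prop :=
  forall u v, form S (u *m A) v = - form S u (v *m A).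

Definition symmetric_op (S : 'M[R]_n) (f : 'rV[R]_n -> 'rV[R]_n) : Prop :=
  forall u v, form S (f u) v = form S u (f v).

Definition structure_endos (S : 'M[R]_n) (br : 'rV[R]_n -> 'rV[R]_n -> 'rV[R]_n)
    (p : nat) (e : 'I_p -> 'rV[R]_n) (J : 'I_p -> 'M[R]_n) : Prop :=
  (forall i, skew S (J i)) /\
  (forall u v, br u v = \sum_i form S (u *m J i) v *: e i).

Definition Fop (S : 'M[R]_n) (p : nat) (e : 'I_p -> 'rV[R]_n) (J : 'I_p -> 'M[R]_n)
    (u : 'rV[R]_n) : 'rV[R]_n :=
  2^-1 *: \sum_i \sum_j form S (e i) (e j) *: (u *m J j *m J i).

Definition Gop (S : 'M[R]_n) (p : nat) (e : 'I_p -> 'rV[R]_n) (J : 'I_p -> 'M[R]_n)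
    (u : 'rV[R]_n) : 'rV[R]_n :=
  - (4^-1) *: \sum_i \sum_j (form S (e i) u * \tr (J j *m J i)) *: e j.

End Defs.

(* If e'_k = sum_i P k i e_i, comparing the coordinates of [u,v] in the basis e
   and using nondegeneracy gives J_i = sum_k P k i J'_k: the structure
   endomorphisms transform contragrediently to the basis. F and G are sums over
   pairs of indices of terms bilinear in (e_i, J_i) and in (e_j, J_j), and such
   contractions are unchanged by this simultaneous change of coordinates.
   Symmetry comes from the skew-symmetry of the J_i and the symmetry of the form.
   Every J_i vanishes on the center; since G takes values in the center this
   gives F o G = 0, and since F is symmetric and kills the center the
   coefficients <e_i, F u> = <F e_i, u> of G (F u) vanish. *)

From Pilot Require Import Defs.
From HB Require Import structures.
From mathcomp Require Import all_boot all_order all_algebra.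
From mathcomp Require Import reals.
Set Implicit Arguments. Unset Strict Implicit. Unset Printing Implicit Defensive.
Import GRing.Theory.
Local Open Scope ring_scope.
Local Notation skew := Defs.skew.
Local Notation symmetric_op := Defs.symmetric_op.

Lemma linear_sumZ (R : ringType) (U V : lmodType R) (f : U -> V) :
  linear f -> forall (I : finType) (c : I -> R) (u : I -> U),
  f (\sum_i c i *: u i) = \sum_i c i *: f (u i).
Proof.
move=> f_lin I c u; have f0 : f 0 = 0.
  by have := f_lin (-1) 0 0; rewrite scaler0 addr0 scaleN1r addNr.
by elim/big_rec2: _ => [|i v w _ <-]; rewrite ?f0 ?f_lin.
Qed.

Section ChangeOfBasis.
Variables (R : ringType) (X Y V : lmodType R) (phi : X -> Y -> V).
Hypotheses (phi_linl : forall y, linear (phi^~ y)) (phi_linr : forall x, linear (phi x)).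

Lemma sum_change_basis p p' (x : 'I_p -> X) (x' : 'I_p' -> X)
    (y : 'I_p -> Y) (y' : 'I_p' -> Y) (P : 'I_p' -> 'I_p -> R) :
  (forall k, x' k = \sum_i P k i *: x i) ->
  (forall i, y i = \sum_k P k i *: y' k) ->
  \sum_k phi (x' k) (y' k) = \sum_i phi (x i) (y i).
Proof.
move=> def_x' def_y.
under eq_bigr => k _ do rewrite def_x' (linear_sumZ (phi_linl _)).
rewrite exchange_big; apply: eq_bigr => i _.
by rewrite def_y (linear_sumZ (phi_linr _)).
Qed.

End ChangeOfBasis.

Section Form.
Variables (R : realType) (n : nat) (S : 'M[R]_n).
Local Notation form := (Defs.form S).

Lemma formDl u1 u2 v : form (u1 + u2) v = form u1 v + form u2 v.
Proof. by rewrite /form !mulmxDl mxE. Qed.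

Lemma formDr u v1 v2 : form u (v1 + v2) = form u v1 + form u v2.
Proof. by rewrite /form linearD mulmxDr mxE. Qed.

Lemma formBl u1 u2 v : form (u1 - u2) v = form u1 v - form u2 v.
Proof. by rewrite /form !mulmxBl !mxE. Qed.

Lemma formZl a u v : form (a *: u) v = a * form u v.
Proof. by rewrite /form -!scalemxAl mxE. Qed.

Lemma formZr a u v : form u (a *: v) = a * form u v.
Proof. by rewrite /form linearZ -scalemxAr mxE. Qed.

Lemma form0l v : form 0 v = 0.
Proof. by rewrite /form !mul0mx mxE. Qed.

Lemma form_suml (I : Type) (r : seq I) (P : pred I) (f : I -> 'rV[R]_n) v :
  form (\sum_(i <- r | P i) f i) v = \sum_(i <- r | P i) form (f i) v.
Proof. by rewrite /form !mulmx_suml summxE. Qed.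

Lemma form_sumr (I : Type) (r : seq I) (P : pred I) (f : I -> 'rV[R]_n) u :
  form u (\sum_(i <- r | P i) f i) = \sum_(i <- r | P i) form u (f i).
Proof. by rewrite /form raddf_sum mulmx_sumr summxE. Qed.

Lemma form_sym : S^T = S -> forall u v, form u v = form v u.
Proof.
move=> S_sym u v; rewrite /form; have -> : (u *m S *m v^T) 0 0 = (u *m S *m v^T)^T 0 0.
  by rewrite [RHS]mxE.
by rewrite !trmx_mul trmxK S_sym mulmxA.
Qed.

Lemma form_nondeg : S \in unitmx -> forall u w, (forall v, form u v = form w v) -> u = w.
Proof.
move=> S_unit u w uw; apply/eqP; rewrite -subr_eq0; apply/eqP.
have uwS : (u - w) *m S = 0.
  apply/rowP => j; have /eqP := uw (delta_mx 0 j); rewrite -subr_eq0 -formBl.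
  by rewrite /form trmx_delta -colE mxE => /eqP ->; rewrite mxE.
by rewrite -[_ - _]mulmx1 -(mulmxV S_unit) mulmxA uwS mul0mx.
Qed.

End Form.

Section StructureOperators.
Variables (R : realType) (n : nat) (S : 'M[R]_n).
Local Notation form := (Defs.form S).

Lemma Fop_change_basis p p' (e : 'I_p -> 'rV[R]_n) J (e' : 'I_p' -> 'rV[R]_n) J'
    (P : 'I_p' -> 'I_p -> R) :
  (forall k, e' k = \sum_i P k i *: e i) -> (forall i, J i = \sum_k P k i *: J' k) ->
  Fop S e' J' =1 Fop S e J.
Proof.
move=> def_e' def_J u; rewrite /Fop; congr (_ *: _).
transitivity (\sum_k \sum_j form (e' k) (e j) *: (u *m J j *m J' k)).
  apply: eq_bigr => k _.
  apply: (@sum_change_basis _ _ _ _ (fun b B => form (e' k) b *: (u *m B *m J' k)))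
    def_e' def_J => [B a b1 b2 | b a B1 B2] /=.
    by rewrite formDr formZr scalerDl scalerA.
  by rewrite mulmxDr mulmxDl -scalemxAr -scalemxAl scalerDr !scalerA mulrC.
rewrite exchange_big [RHS]exchange_big; apply: eq_bigr => j _.
apply: (@sum_change_basis _ _ _ _ (fun a A => form a (e j) *: (u *m J j *m A)))
  def_e' def_J => [A a a1 a2 | a c A1 A2] /=.
  by rewrite formDl formZl scalerDl scalerA.
by rewrite mulmxDr -scalemxAr scalerDr !scalerA mulrC.
Qed.

Lemma Gop_change_basis p p' (e : 'I_p -> 'rV[R]_n) J (e' : 'I_p' -> 'rV[R]_n) J'
    (P : 'I_p' -> 'I_p -> R) :
  (forall k, e' k = \sum_i P k i *: e i) -> (forall i, J i = \sum_k P k i *: J' k) ->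
  Gop S e' J' =1 Gop S e J.
Proof.
move=> def_e' def_J u; rewrite /Gop; congr (_ *: _).
transitivity (\sum_k \sum_j (form (e' k) u * \tr (J j *m J' k)) *: e j).
  apply: eq_bigr => k _.
  apply: (@sum_change_basis _ _ _ _ (fun b B => (form (e' k) u * \tr (B *m J' k)) *: b))
    def_e' def_J => [B a b1 b2 | b a B1 B2] /=.
    by rewrite scalerDr !scalerA [_ * a]mulrC.
  by rewrite mulmxDl -scalemxAl mxtraceD mxtraceZ mulrDr mulrCA !scalerDl scalerA.
rewrite exchange_big [RHS]exchange_big; apply: eq_bigr => j _.
apply: (@sum_change_basis _ _ _ _ (fun a A => (form a u * \tr (J j *m A)) *: e j))
  def_e' def_J => [A a a1 a2 | a c A1 A2] /=.
  by rewrite formDl formZl mulrDl scalerDl scalerA mulrA.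
by rewrite mulmxDr -scalemxAr mxtraceD mxtraceZ mulrDr mulrCA !scalerDl scalerA.
Qed.

Hypothesis S_sym : S^T = S.

Lemma Fop_sym p (e : 'I_p -> 'rV[R]_n) J :
  (forall i, skew S (J i)) -> symmetric_op S (Fop S e J).
Proof.
move=> J_skew u v; rewrite /Fop formZl formZr form_suml form_sumr; congr (_ * _).
under eq_bigr => i _ do rewrite form_suml.
under [RHS]eq_bigr => i _ do rewrite form_sumr.
rewrite [RHS]exchange_big; apply: eq_bigr => i _; apply: eq_bigr => j _.
by rewrite formZl formZr !J_skew opprK (form_sym S_sym (e i)).
Qed.

Lemma Gop_sym p (e : 'I_p -> 'rV[R]_n) J : symmetric_op S (Gop S e J).
Proof.
move=> u v; rewrite /Gop formZl formZr form_suml form_sumr; congr (_ * _).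
under eq_bigr => i _ do rewrite form_suml.
under [RHS]eq_bigr => i _ do rewrite form_sumr.
rewrite [RHS]exchange_big; apply: eq_bigr => i _; apply: eq_bigr => j _.
rewrite formZl formZr mxtrace_mulC (form_sym S_sym u).
by rewrite mulrAC [RHS]mulrAC [form (e j) v * _]mulrC.
Qed.

Section Annihilation.
Variables (p : nat) (e : 'I_p -> 'rV[R]_n) (J : 'I_p -> 'M[R]_n).
Hypothesis eJ0 : forall i j, e j *m J i = 0.

Lemma Fop_Gop u : Fop S e J (Gop S e J u) = 0.
Proof.
have GJ0 k : Gop S e J u *m J k = 0.
  rewrite /Gop -scalemxAl mulmx_suml big1 ?scaler0 // => i _.
  by rewrite mulmx_suml big1 // => j _; rewrite -scalemxAl eJ0 scaler0.
by rewrite /Fop big1 ?scaler0 // => i _; rewrite big1 // => j _; rewrite GJ0 mul0mx scaler0.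
Qed.

Lemma Gop_Fop : (forall i, skew S (J i)) -> forall u, Gop S e J (Fop S e J u) = 0.
Proof.
move=> J_skew u; have Fe0 k : Fop S e J (e k) = 0.
  by rewrite /Fop big1 ?scaler0 // => i _; rewrite big1 // => j _; rewrite eJ0 mul0mx scaler0.
rewrite /Gop big1 ?scaler0 // => i _; rewrite big1 // => j _.
by rewrite -(Fop_sym _ J_skew) Fe0 form0l !mul0r scale0r.
Qed.

End Annihilation.
End StructureOperators.

Section CenterCoordinates.
Variables (R : realType) (n : nat) (S : 'M[R]_n).
Variable br : 'rV[R]_n -> 'rV[R]_n -> 'rV[R]_n.

Lemma is_basis_coordI (P : 'rV[R]_n -> Prop) p (e : 'I_p -> 'rV[R]_n) (c d : 'I_p -> R) :
  is_basis_of P e -> \sum_i c i *: e i = \sum_i d i *: e i -> c =1 d.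
Proof.
case=> _ e_free _ cd i; apply/eqP; rewrite -subr_eq0; apply/eqP.
apply: (e_free (fun i => c i - d i)).
by under eq_bigr do rewrite scalerBl; rewrite sumrB cd subrr.
Qed.

Hypothesis S_unit : S \in unitmx.

Lemma center_mulJ p (e : 'I_p -> 'rV[R]_n) J :
  is_basis_of (center br) e -> structure_endos S br e J ->
  forall z, center br z -> forall i, z *m J i = 0.
Proof.
move=> [_ e_free _] [_ br_e] z z_central i; apply: (form_nondeg S_unit) => v.
by rewrite form0l; apply: (e_free (fun i => Defs.form S (z *m J i) v)); rewrite -br_e.
Qed.

Lemma structure_endos_change_basis p p' (e : 'I_p -> 'rV[R]_n) J
    (e' : 'I_p' -> 'rV[R]_n) J' (P : 'I_p' -> 'I_p -> R) :
  is_basis_of (center br) e -> structure_endos S br e J ->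
  structure_endos S br e' J' -> (forall k, e' k = \sum_i P k i *: e i) ->
  forall i, J i = \sum_k P k i *: J' k.
Proof.
move=> e_basis [_ br_e] [_ br_e'] def_e' i.
have coords u v : (fun i => Defs.form S (u *m J i) v)
    =1 (fun i => Defs.form S (u *m \sum_k P k i *: J' k) v).
  apply: (is_basis_coordI e_basis); rewrite -br_e br_e'.
  under eq_bigr => k _ do rewrite def_e' scaler_sumr.
  rewrite exchange_big; apply: eq_bigr => j _.
  rewrite mulmx_sumr form_suml scaler_suml; apply: eq_bigr => k _.
  by rewrite -scalemxAr formZl scalerA mulrC.
by apply/row_matrixP => r; rewrite !rowE; apply: (form_nondeg S_unit) => v; apply: coords.
Qed.

Lemma Fop_Gop_basis_invariant p p' (e : 'I_p -> 'rV[R]_n) J (e' : 'I_p' -> 'rV[R]_n) J' :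
  is_basis_of (center br) e -> structure_endos S br e J ->
  is_basis_of (center br) e' -> structure_endos S br e' J' ->
  Fop S e' J' =1 Fop S e J /\ Gop S e' J' =1 Gop S e J.
Proof.
move=> e_basis e_struct [e'_center _ _] e'_struct.
have [_ _ e_span] := e_basis.
have [P def_e'] := @fin_all_exists _ (fun _ => 'I_p -> R)
  (fun k c => e' k = \sum_i c i *: e i) (fun k => e_span _ (e'_center k)).
have def_J := structure_endos_change_basis e_basis e_struct e'_struct def_e'.
by split; [apply: Fop_change_basis def_e' def_J | apply: Gop_change_basis def_e' def_J].
Qed.

End CenterCoordinates.

Theorem mainTheorem2 (R : realType) (n : nat) (S : 'M[R]_n)
    (br : 'rV[R]_n -> 'rV[R]_n -> 'rV[R]_n)
    (p : nat) (e : 'I_p -> 'rV[R]_n) (J : 'I_p -> 'M[R]_n) :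
  pseudo_euclidean S ->
  is_lie_bracket br ->
  two_step_nilpotent br ->
  is_basis_of (center br) e ->
  structure_endos S br e J ->
  [/\ symmetric_op S (Fop S e J),
      symmetric_op S (Gop S e J),
      (forall (p' : nat) (e' : 'I_p' -> 'rV[R]_n) (J' : 'I_p' -> 'M[R]_n),
          is_basis_of (center br) e' -> structure_endos S br e' J' ->
          Fop S e' J' =1 Fop S e J /\ Gop S e' J' =1 Gop S e J),
      (forall u, Fop S e J (Gop S e J u) = 0) &
      (forall u, Gop S e J (Fop S e J u) = 0)].
Proof.
move=> [S_sym S_unit] _ _ e_basis e_struct.
have J_skew := e_struct.1.
have eJ0 i j : e j *m J i = 0.
  by apply: (center_mulJ S_unit e_basis e_struct); case: e_basis.
split.
- exact: Fop_sym.
- exact: Gop_sym.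
- by move=> p' e' J'; apply: Fop_Gop_basis_invariant.
- exact: Fop_Gop.
- exact: Gop_Fop.
Qed.
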